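(* Let $\Omega_n=\dfrac{\pi^{n/2}}{\Gamma\left(\frac n2+1\right)}$ for $n\in\mathbb{N}_0$, and \[ \varepsilon_1(n)=-\frac{\frac14\pi-4\pi^2+8\pi^3}{n^3},\qquad \varepsilon_2(n)=\varepsilon_1(n)+\frac{\frac38\pi-7\pi^2-12\pi^3+64\pi^4}{n^4}. \] Then for every $n\in\mathbb{N}$, \[ \sqrt{\frac{2\pi}{n+4\pi+\frac12}+\varepsilon_1(n)}<\frac{\Omega_n}{\Omega_{n-1}+\Omega_{n+1}}<\sqrt{\frac{2\pi}{n+4\pi+\frac12}+\varepsilon_2(n)}. \]
   Context: $\Omega_n$ is the volume of the unit ball in $\mathbb{R}^n$ ($\Omega_0=1$); $\Gamma$ is Euler's gamma function. *)

From Stdlib Require Import Reals.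
From Coquelicot Require Import Coquelicot.
Open Scope R_scope.

(* Euler's Gamma function, Gamma(s) = \int_0^{+oo} t^(s-1) e^(-t) dt
   (used here only for s >= 1, where the integral converges). *)
Definition Gamma (s : R) : R :=
  RInt_gen (fun t => Rpower t (s - 1) * exp (- t)) (at_right 0) (Rbar_locally p_infty).

Definition Omega (n : nat) : R :=
  Rpower PI (INR n / 2) / Gamma (INR n / 2 + 1).

Definition eps_1 (n : nat) : R :=
  - (/4 * PI - 4 * PI ^ 2 + 8 * PI ^ 3) / INR n ^ 3.

Definition eps_2 (n : nat) : R :=
  eps_1 n + (3/8 * PI - 7 * PI ^ 2 - 12 * PI ^ 3 + 64 * PI ^ 4) / INR n ^ 4.

(* Writing y_n = (Gamma((n+1)/2) / Gamma(n/2+1))^2, the middle term of the theorem equals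
   sqrt(pi y_n) (n+1)/(n+1+2 pi), so the theorem amounts to bounds L_n < y_n < U_n by explicit
   rational functions of n.  From Gamma(s+1) = s Gamma(s) we get y_{n+2} (n+2)^2 = y_n (n+1)^2,
   and log-convexity of Gamma (Cauchy-Schwarz on Euler's integral) gives 2/(n+1) <= y_n <= 2/n.
   Polynomial inequalities, valid for every p within 10^-8 of pi, show
   U_{n+2} (n+2)^2 < U_n (n+1)^2 and, for n >= 10, L_{n+2} (n+2)^2 > L_n (n+1)^2.  Hence y_n/U_n
   increases and y_n/L_n decreases along n, n+2, n+4, ..., while both tend to 1 since
   U_n and L_n are 2/n + O(1/n^2).  For n <= 9 the radicand of the lower bound is negative. *)

From Stdlib Require Import Reals Lra Lia Machin Factorial List.
Import ListNotations.
From Coquelicot Require Import Coquelicot.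
Open Scope R_scope.

Local Notation at_0 := (at_right 0).
Local Notation at_oo := (Rbar_locally p_infty).

Lemma filter_prod_between_pos (P : R -> Prop) :
  (forall x, 0 < x -> P x) ->
  filter_prod at_0 at_oo
    (fun ab => forall x, Rmin (fst ab) (snd ab) <= x <= Rmax (fst ab) (snd ab) -> P x).
Proof.
intros HP. apply Filter_prod with (fun a => 0 < a) (fun b => 0 < b).
- unfold at_right, within. apply filter_forall. now intros x Hx.
- now exists 0.
- intros a b Ha Hb x Hx. apply HP.
  assert (0 < Rmin a b) by now apply Rmin_glb_lt. simpl in Hx. lra.
Qed.

Lemma is_RInt_gen_ext_pos (f g : R -> R) (l : R) :
  (forall x, 0 < x -> f x = g x) ->
  is_RInt_gen f at_0 at_oo l -> is_RInt_gen g at_0 at_oo l.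
Proof.
intros Hfg. apply is_RInt_gen_ext.
apply filter_imp with (2 := filter_prod_between_pos _ Hfg).
intros [a b] H x Hx. apply H. simpl in *. lra.
Qed.

Lemma is_RInt_gen_derive_pos (F f : R -> R) (la lb : R) :
  (forall x, 0 < x -> is_derive F x (f x)) ->
  (forall x, 0 < x -> continuous f x) ->
  filterlim F at_0 (locally la) -> filterlim F at_oo (locally lb) ->
  is_RInt_gen f at_0 at_oo (lb - la).
Proof.
intros HF Hf Hla Hlb.
apply is_RInt_gen_ext_pos with (Derive F).
{ intros x Hx. now apply is_derive_unique, HF. }
apply is_RInt_gen_Derive; trivial.
- apply filter_prod_between_pos. intros x Hx. eexists. now apply HF.
- apply filter_prod_between_pos. intros x Hx.
  apply continuous_ext_loc with f; [|now apply Hf].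
  exists (mkposreal x Hx). intros y Hy. change (Rabs (y - x) < x) in Hy.
  apply Rabs_def2 in Hy. symmetry. apply is_derive_unique, HF. lra.
Qed.

Lemma is_RInt_gen_ge0_pos (f : R -> R) (l : R) :
  (forall x, 0 < x -> 0 <= f x) -> is_RInt_gen f at_0 at_oo l -> 0 <= l.
Proof.
intros Hf H.
enough (Rabs l <= l) by (pose proof (Rle_abs (- l)); rewrite Rabs_Ropp in *; lra).
apply (RInt_gen_norm (Fa := at_0) (Fb := at_oo) f f l l); trivial.
- apply Filter_prod with (fun a => a < 1) (fun b => 1 < b).
  + unfold at_right, within, locally. exists (mkposreal 1 Rlt_0_1). intros y Hy _.
    change (Rabs (y - 0) < 1) in Hy. apply Rabs_def2 in Hy. lra.
  + now exists 1.
  + simpl. intros a b Ha Hb. lra.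
- apply filter_imp with (2 := filter_prod_between_pos _ Hf).
  intros [a b] Hab x Hx. simpl in *.
  assert (0 <= f x) by (apply Hab; pose proof (Rmin_l a b); pose proof (Rmax_r a b); lra).
  change (Rabs (f x) <= f x). rewrite Rabs_pos_eq; lra.
Qed.

Lemma filterlim_at_right_0_of_bound (g : R -> R) (L : R) :
  (forall t, 0 < t < 1 -> Rabs (g t - L) <= t) -> filterlim g at_0 (locally L).
Proof.
intros Hg. apply filterlim_locally. intros eps.
assert (He : 0 < Rmin eps 1) by (apply Rmin_glb_lt; [apply cond_pos | lra]).
unfold at_right, within, locally. exists (mkposreal _ He). intros t Ht Ht0.
change (Rabs (t - 0) < Rmin eps 1) in Ht. apply Rabs_def2 in Ht.
pose proof (Rmin_l eps 1). pose proof (Rmin_r eps 1).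
change (Rabs (g t - L) < eps).
assert (Rabs (g t - L) <= t) by (apply Hg; lra). lra.
Qed.

Lemma filterlim_p_infty_0_of_bound (g : R -> R) (M C : R) :
  0 < M -> (forall t, M < t -> Rabs (g t) <= C / t) -> filterlim g at_oo (locally 0).
Proof.
intros HM Hg. apply filterlim_locally. intros eps.
pose proof (cond_pos eps) as Heps.
exists (Rmax M (Rabs C / eps)). intros t Ht.
pose proof (Rmax_l M (Rabs C / eps)). pose proof (Rmax_r M (Rabs C / eps)).
change (Rabs (g t - 0) < eps). rewrite Rminus_0_r.
assert (Ht0 : 0 < t) by lra.
assert (HC : C < t * eps).
{ assert (Hlt : Rabs C / eps * eps < t * eps) by (apply Rmult_lt_compat_r; lra).
  replace (Rabs C / eps * eps) with (Rabs C) in Hlt by (field; lra).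
  pose proof (Rle_abs C). lra. }
apply Rle_lt_trans with (C / t); [now apply Hg; lra |].
apply Rmult_lt_reg_r with t; trivial. unfold Rdiv. rewrite Rmult_assoc, Rinv_l; lra.
Qed.

Definition gamma_integrand (s t : R) : R := Rpower t (s - 1) * exp (- t).

Definition is_Gamma (s l : R) : Prop := is_RInt_gen (gamma_integrand s) at_0 at_oo l.

Lemma Gamma_unique (s l : R) : is_Gamma s l -> Gamma s = l.
Proof.
intros H. exact (@is_RInt_gen_unique R_CompleteNormedModule at_0 at_oo
  (Proper_StrongProper _ (at_right_proper_filter 0))
  (Proper_StrongProper _ (Rbar_locally_filter p_infty)) _ l H).
Qed.

Lemma gamma_integrand_pos (s t : R) : 0 < gamma_integrand s t.
Proof. apply Rmult_lt_0_compat; apply exp_pos. Qed.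

Lemma is_Gamma_ge0 (s l : R) : is_Gamma s l -> 0 <= l.
Proof.
intros H. apply (is_RInt_gen_ge0_pos (gamma_integrand s)); [| exact H].
intros t _. left. apply gamma_integrand_pos.
Qed.

Lemma is_derive_Rpower (s x : R) :
  0 < x -> is_derive (fun t => Rpower t s) x (s * Rpower x (s - 1)).
Proof. intros Hx. now apply is_derive_Reals, derivable_pt_lim_power. Qed.

Lemma continuous_gamma_integrand (s x : R) : 0 < x -> continuous (gamma_integrand s) x.
Proof.
intros Hx. apply (@ex_derive_continuous R_AbsRing R_NormedModule).
eexists. apply (is_derive_mult (fun t => Rpower t (s - 1)) (fun t => exp (- t))).
- now apply is_derive_Rpower.
- auto_derive; trivial.
- intros; apply Rmult_comm.
Qed.

Lemma pow_le_fact_mul_exp (t : R) (N : nat) : 0 <= t -> t ^ N <= INR (fact N) * exp t.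
Proof.
intros Ht.
assert (HN : 0 < INR (fact N)) by apply INR_fact_lt_0.
enough (Hd : t ^ N / INR (fact N) <= exp t).
{ replace (t ^ N) with (INR (fact N) * (t ^ N / INR (fact N))) by (field; lra).
  apply Rmult_le_compat_l; lra. }
eapply Rle_trans; [| exact (exp_ge_taylor t N Ht)].
destruct N as [| N]; [now right |].
rewrite tech5.
enough (0 <= sum_f_R0 (fun k => t ^ k / INR (fact k)) N) by lra.
apply cond_pos_sum. intros k.
apply Rmult_le_pos; [now apply pow_le | left; apply Rinv_0_lt_compat, INR_fact_lt_0].
Qed.

Lemma Rpower_le_self (s t : R) : 1 <= s -> 0 < t <= 1 -> Rpower t s <= t.
Proof.
intros Hs Ht.
replace s with (1 + (s - 1)) by ring. rewrite Rpower_plus, Rpower_1 by lra.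
enough (Rpower t (s - 1) <= 1) by nra.
replace 1 with (Rpower 1 (s - 1)) at 2 by (unfold Rpower; rewrite ln_1, Rmult_0_r; apply exp_0).
apply Rle_Rpower_l; lra.
Qed.

Lemma filterlim_Rpower_exp_at_0 (s : R) :
  1 <= s -> filterlim (fun t => Rpower t s * exp (- t)) at_0 (locally 0).
Proof.
intros Hs. apply filterlim_at_right_0_of_bound. intros t Ht.
assert (Hpos : 0 < Rpower t s) by apply exp_pos.
assert (exp (- t) <= 1) by (left; rewrite <- exp_0; apply exp_increasing; lra).
pose proof (Rpower_le_self s t Hs ltac:(lra)).
rewrite Rminus_0_r, Rabs_pos_eq; [nra |].
apply Rmult_le_pos; [lra | left; apply exp_pos].
Qed.

Lemma filterlim_Rpower_exp_at_oo (s : R) :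
  0 <= s -> filterlim (fun t => Rpower t s * exp (- t)) at_oo (locally 0).
Proof.
intros Hs. destruct (INR_unbounded (s + 1)) as [N HN].
apply filterlim_p_infty_0_of_bound with 1 (INR (fact N)); [lra |].
intros t Ht.
assert (Hpos : 0 < Rpower t s) by apply exp_pos.
assert (Hexp : 0 < exp t) by apply exp_pos.
rewrite Rabs_pos_eq by (apply Rmult_le_pos; [lra | left; apply exp_pos]).
assert (Hst : Rpower t s * t <= t ^ N).
{ replace (Rpower t s * t) with (Rpower t (s + 1)) by (rewrite Rpower_plus, Rpower_1; lra).
  rewrite <- Rpower_pow by lra. apply Rle_Rpower; lra. }
pose proof (pow_le_fact_mul_exp t N ltac:(lra)).
rewrite exp_Ropp.
apply Rmult_le_reg_r with (t * exp t); [nra |].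
replace (Rpower t s * / exp t * (t * exp t)) with (Rpower t s * t) by (field; lra).
replace (INR (fact N) / t * (t * exp t)) with (INR (fact N) * exp t) by (field; lra).
lra.
Qed.

Lemma is_Gamma_1 : is_Gamma 1 1.
Proof.
unfold is_Gamma.
apply is_RInt_gen_ext_pos with (fun t => exp (- t)).
{ intros t Ht. unfold gamma_integrand. rewrite Rminus_diag, Rpower_O by lra. ring. }
replace 1 with (0 - - exp (- 0)) by (rewrite Ropp_0, exp_0; ring).
apply is_RInt_gen_derive_pos with (fun t => - exp (- t)).
- intros x _. auto_derive; trivial. ring.
- intros x _. apply (@ex_derive_continuous R_AbsRing R_NormedModule). auto_derive. trivial.
- rewrite Ropp_0, exp_0. apply filterlim_at_right_0_of_bound. intros t Ht.
  assert (exp (- t) <= 1) by (left; rewrite <- exp_0; apply exp_increasing; lra).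
  pose proof (exp_ineq1_le (- t)).
  rewrite Rabs_pos_eq; lra.
- apply filterlim_p_infty_0_of_bound with 1 1; [lra |]. intros t Ht.
  pose proof (exp_ineq1_le t).
  rewrite Rabs_Ropp, Rabs_pos_eq, exp_Ropp by (left; apply exp_pos).
  unfold Rdiv. rewrite Rmult_1_l. apply Rinv_le_contravar; lra.
Qed.

Lemma is_derive_neg_Rpower_exp (s x : R) : 0 < x ->
  is_derive (fun t => - (Rpower t s * exp (- t))) x
    (gamma_integrand (s + 1) x - s * gamma_integrand s x).
Proof.
intros Hx.
assert (Dexp : is_derive (fun t => exp (- t)) x (- exp (- x))) by (auto_derive; trivial; ring).
pose proof (is_derive_opp _ _ _
  (is_derive_mult _ _ _ _ _ (is_derive_Rpower s x Hx) Dexp Rmult_comm)) as D.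
replace (gamma_integrand (s + 1) x - s * gamma_integrand s x)
  with (- (s * Rpower x (s - 1) * exp (- x) + Rpower x s * - exp (- x))); [exact D |].
unfold gamma_integrand. replace (s + 1 - 1) with s by ring. ring.
Qed.

Lemma is_Gamma_succ (s l : R) : 1 <= s -> is_Gamma s l -> is_Gamma (s + 1) (s * l).
Proof.
intros Hs Hl. unfold is_Gamma in *.
assert (H0 : is_RInt_gen (fun t => gamma_integrand (s + 1) t - s * gamma_integrand s t)
               at_0 at_oo (opp 0 - opp 0)).
{ apply is_RInt_gen_derive_pos with (fun t => - (Rpower t s * exp (- t))).
  - intros x Hx. now apply is_derive_neg_Rpower_exp.
  - intros x Hx. apply (continuous_minus (V := R_NormedModule));
      [| apply (continuous_scal_r (V := R_NormedModule))];
      now apply continuous_gamma_integrand.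
  - eapply filterlim_comp; [apply filterlim_Rpower_exp_at_0; lra |].
    apply (@filterlim_opp R_AbsRing R_NormedModule).
  - eapply filterlim_comp; [apply filterlim_Rpower_exp_at_oo; lra |].
    apply (@filterlim_opp R_AbsRing R_NormedModule). }
replace (s * l) with (plus (opp 0 - opp 0) (scal s l))
  by (change (- 0 - - 0 + s * l = s * l); ring).
apply is_RInt_gen_ext with (2 := is_RInt_gen_plus _ _ _ _ H0 (is_RInt_gen_scal _ s _ Hl)).
apply filter_forall. intros ab x _.
change (gamma_integrand (s + 1) x - s * gamma_integrand s x + s * gamma_integrand s x
  = gamma_integrand (s + 1) x). ring.
Qed.

Lemma filterlim_at_oo_of_incr_bounded (F : R -> R) (M : R) :
  (forall a b, 0 <= a <= b -> F a <= F b) -> (forall b, 0 <= b -> F b <= M) ->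
  exists l, filterlim F at_oo (locally l).
Proof.
intros Hincr HM.
set (E := fun y => exists t, 0 <= t /\ y = F t).
destruct (completeness E) as [l [Hub Hlub]].
{ exists M. intros y [t [Ht ->]]. now apply HM. }
{ exists (F 0), 0. split; [lra | trivial]. }
exists l. apply filterlim_locally. intros eps.
pose proof (cond_pos eps) as Heps.
destruct (Classical_Prop.classic (exists t, 0 <= t /\ l - eps < F t))
  as [[t0 [Ht0 Hlt]] | Hnone].
- exists t0. intros t Ht. change (Rabs (F t - l) < eps).
  assert (F t0 <= F t) by (apply Hincr; lra).
  assert (F t <= l) by (apply Hub; exists t; split; [lra | trivial]).
  apply Rabs_def1; lra.
- exfalso. enough (l <= l - eps) by lra.
  apply Hlub. intros y [t [Ht ->]].
  apply Rnot_lt_le. intros Hlt. apply Hnone. now exists t.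
Qed.

Lemma ex_RInt_gen_of_bounded (f : R -> R) (M : R) :
  (forall x, continuous f x) -> (forall x, 0 <= x -> 0 <= f x) ->
  (forall b, 0 <= b -> RInt f 0 b <= M) ->
  exists l, is_RInt_gen f at_0 at_oo l.
Proof.
intros Hc Hpos HM.
assert (Hex : forall a b, ex_RInt f a b)
  by (intros a b; apply (@ex_RInt_continuous R_CompleteNormedModule); auto).
set (F := fun b => RInt f 0 b).
assert (HF : forall x, is_derive F x (f x)).
{ intros x. apply is_derive_RInt with 0; [| apply Hc].
  apply filter_forall. intros b. now apply RInt_correct. }
destruct (filterlim_at_oo_of_incr_bounded F M) as [l Hl]; [| exact HM |].
{ intros a b Hab. unfold F. rewrite <- (RInt_Chasles f 0 a b) by apply Hex.
  enough (0 <= RInt f a b) by (change (RInt f 0 a <= RInt f 0 a + RInt f a b); lra).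
  apply RInt_ge_0; [lra | apply Hex |]. intros x Hx. apply Hpos. lra. }
exists (l - 0). apply is_RInt_gen_derive_pos with F; auto.
apply (filterlim_filter_le_1 (F := locally 0)); [apply filter_le_within |].
replace 0 with (F 0) at 2 by (unfold F; now rewrite RInt_point).
apply (@ex_derive_continuous R_AbsRing R_NormedModule). eexists. apply HF.
Qed.

Lemma RInt_sqrt_exp_le_2 (b : R) : 0 <= b -> RInt (fun t => sqrt t * exp (- t)) 0 b <= 2.
Proof.
intros Hb.
set (k := fun u => (1 + u) * exp (- u)).
assert (Hk : is_RInt k 0 b (- ((2 + b) * exp (- b)) - - ((2 + 0) * exp (- 0)))).
{ apply (@is_RInt_derive R_CompleteNormedModule (fun u => - ((2 + u) * exp (- u))) k).
  - intros x _. unfold k. auto_derive; trivial. ring.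
  - intros x _. unfold k. apply (@ex_derive_continuous R_AbsRing R_NormedModule).
    auto_derive. trivial. }
apply Rle_trans with (RInt k 0 b).
- apply RInt_le; trivial.
  + apply (@ex_RInt_continuous R_CompleteNormedModule). intros x _.
    apply (@continuous_mult R_UniformSpace R_AbsRing); [apply continuous_sqrt |].
    apply (@ex_derive_continuous R_AbsRing R_NormedModule). auto_derive. trivial.
  + eexists. exact Hk.
  + intros x Hx. unfold k. pose proof (exp_pos (- x)).
    assert (sqrt x <= 1 + x).
    { pose proof (sqrt_pos x). pose proof (sqrt_sqrt x ltac:(lra)). nra. }
    nra.
- rewrite (is_RInt_unique _ _ _ _ Hk), Ropp_0, exp_0.
  pose proof (exp_pos (- b)). nra.
Qed.

Lemma ex_Gamma_3_2 : exists l, is_Gamma (3 / 2) l.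
Proof.
destruct (ex_RInt_gen_of_bounded (fun t => sqrt t * exp (- t)) 2) as [l Hl].
- intros x. apply (@continuous_mult R_UniformSpace R_AbsRing); [apply continuous_sqrt |].
  apply (@ex_derive_continuous R_AbsRing R_NormedModule). auto_derive. trivial.
- intros x _. apply Rmult_le_pos; [apply sqrt_pos | left; apply exp_pos].
- exact RInt_sqrt_exp_le_2.
- exists l. unfold is_Gamma. apply is_RInt_gen_ext_pos with (2 := Hl).
  intros t Ht. unfold gamma_integrand.
  replace (3 / 2 - 1) with (/ 2) by field. now rewrite Rpower_sqrt.
Qed.

Lemma discriminant_le (a b c : R) :
  0 <= a -> (forall x, 0 <= a * x ^ 2 + 2 * b * x + c) -> b ^ 2 <= a * c.
Proof.
intros Ha H.
destruct (Rle_lt_or_eq_dec _ _ Ha) as [Hpos | <-].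
- specialize (H (- b / a)).
  replace (a * (- b / a) ^ 2 + 2 * b * (- b / a) + c) with ((a * c - b ^ 2) / a) in H
    by (field; lra).
  apply (Rmult_le_compat_r a) in H; [| lra].
  unfold Rdiv in H. rewrite Rmult_0_l, Rmult_assoc, Rinv_l, Rmult_1_r in H; lra.
- destruct (Req_dec b 0) as [-> | Hb]; [lra | exfalso].
  specialize (H (- (Rabs c + 1) / (2 * b))).
  replace (0 * (- (Rabs c + 1) / (2 * b)) ^ 2 + 2 * b * (- (Rabs c + 1) / (2 * b)) + c)
    with (c - (Rabs c + 1)) in H by (field; trivial).
  pose proof (Rle_abs c). lra.
Qed.

Lemma is_Gamma_sqr_le (s l1 lm l2 : R) :
  is_Gamma s l1 -> is_Gamma (s + / 2) lm -> is_Gamma (s + 1) l2 -> lm ^ 2 <= l1 * l2.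
Proof.
intros H1 Hm H2.
apply discriminant_le; [exact (is_Gamma_ge0 _ _ H1) |]. intros x.
unfold is_Gamma in *.
pose proof (is_RInt_gen_plus _ _ _ _
  (is_RInt_gen_plus _ _ _ _ (is_RInt_gen_scal _ (x ^ 2) _ H1) (is_RInt_gen_scal _ (2 * x) _ Hm))
  H2) as H.
replace (l1 * x ^ 2 + 2 * lm * x + l2)
  with (plus (plus (scal (x ^ 2) l1) (scal (2 * x) lm)) l2)
  by (change (x ^ 2 * l1 + 2 * x * lm + l2 = l1 * x ^ 2 + 2 * lm * x + l2); ring).
apply (is_RInt_gen_ge0_pos _ _) with (2 := H). intros t Ht.
change (0 <= x ^ 2 * gamma_integrand s t + 2 * x * gamma_integrand (s + / 2) t
             + gamma_integrand (s + 1) t).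
unfold gamma_integrand.
replace (s + / 2 - 1) with ((s - 1) + / 2) by field.
replace (s + 1 - 1) with ((s - 1) + / 2 + / 2) by field.
rewrite !Rpower_plus, Rpower_sqrt by trivial.
pose proof (exp_pos (- t)). pose proof (exp_pos ((s - 1) * ln t)).
pose proof (sqrt_sqrt t ltac:(lra)).
replace (x ^ 2 * (Rpower t (s - 1) * exp (- t)) + 2 * x * (Rpower t (s - 1) * sqrt t * exp (- t))
         + Rpower t (s - 1) * sqrt t * sqrt t * exp (- t))
  with (Rpower t (s - 1) * exp (- t) * (x + sqrt t) ^ 2) by ring.
apply Rmult_le_pos; [apply Rmult_le_pos; left; apply exp_pos | apply pow2_ge_0].
Qed.

Definition Gamma_half (k : nat) : R := Gamma (INR k / 2 + 1).

Lemma INR_half_S (k : nat) : INR (S k) / 2 + 1 = INR k / 2 + 1 + / 2.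
Proof. rewrite S_INR. field. Qed.

Lemma INR_half_SS (k : nat) : INR (S (S k)) / 2 + 1 = INR k / 2 + 1 + 1.
Proof. rewrite !S_INR. field. Qed.

Lemma is_Gamma_half (k : nat) : is_Gamma (INR k / 2 + 1) (Gamma_half k).
Proof.
enough (Hex : exists l, is_Gamma (INR k / 2 + 1) l)
  by (destruct Hex as [l Hl]; unfold Gamma_half; now rewrite (Gamma_unique _ _ Hl)).
enough (H : forall k, (exists l, is_Gamma (INR k / 2 + 1) l)
                      /\ (exists l, is_Gamma (INR (S k) / 2 + 1) l)) by exact (proj1 (H k)).
clear k. induction k as [| k [[l Hl] HS]].
- split.
  + exists 1. replace (INR 0 / 2 + 1) with 1 by (simpl; field). exact is_Gamma_1.
  + replace (INR 1 / 2 + 1) with (3 / 2) by (simpl; field). exact ex_Gamma_3_2.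
- split; [exact HS |].
  exists ((INR k / 2 + 1) * l). rewrite INR_half_SS.
  apply is_Gamma_succ; [pose proof (pos_INR k); lra | exact Hl].
Qed.

Lemma Gamma_half_SS (k : nat) : Gamma_half (S (S k)) = (INR k / 2 + 1) * Gamma_half k.
Proof.
unfold Gamma_half at 1. apply Gamma_unique. rewrite INR_half_SS.
apply is_Gamma_succ; [pose proof (pos_INR k); lra | apply is_Gamma_half].
Qed.

Lemma Gamma_half_sqr_le (k : nat) : Gamma_half (S k) ^ 2 <= Gamma_half k * Gamma_half (S (S k)).
Proof.
apply (is_Gamma_sqr_le (INR k / 2 + 1)); [apply is_Gamma_half | |];
  [rewrite <- INR_half_S | rewrite <- INR_half_SS]; apply is_Gamma_half.
Qed.

(* [Gamma(3/2) = 0] would give [Gamma(2)^2 <= Gamma(3/2) Gamma(5/2) = 0], while [Gamma(2) = 1]. *)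
Lemma Gamma_half_pos (k : nat) : 0 < Gamma_half k.
Proof.
assert (G0 : Gamma_half 0 = 1).
{ unfold Gamma_half. apply Gamma_unique.
  replace (INR 0 / 2 + 1) with 1 by (simpl; field). exact is_Gamma_1. }
assert (G1 : 0 < Gamma_half 1).
{ pose proof (Gamma_half_sqr_le 1) as H.
  rewrite (Gamma_half_SS 1), (Gamma_half_SS 0), G0 in H.
  pose proof (is_Gamma_ge0 _ _ (is_Gamma_half 1)) as H1.
  destruct H1 as [H1 | H1]; [exact H1 |].
  rewrite <- H1 in H. simpl in H. lra. }
enough (H : forall k, 0 < Gamma_half k /\ 0 < Gamma_half (S k)) by exact (proj1 (H k)).
clear k. induction k as [| k [IH1 IH2]]; [split; lra |].
split; [exact IH2 |]. rewrite Gamma_half_SS.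
apply Rmult_lt_0_compat; [pose proof (pos_INR k); lra | exact IH1].
Qed.

(* [Gamma_half (pred n) = Gamma((n+1)/2)] for [n >= 1]. *)
Definition ratio_sq (n : nat) : R := (Gamma_half (pred n) / Gamma_half n) ^ 2.

Lemma ratio_sq_pos (n : nat) : 0 < ratio_sq n.
Proof.
apply pow_lt, Rdiv_lt_0_compat; apply Gamma_half_pos.
Qed.

Lemma ratio_sq_SS (n : nat) : (1 <= n)%nat ->
  ratio_sq (S (S n)) * (INR n + 2) ^ 2 = ratio_sq n * (INR n + 1) ^ 2.
Proof.
intros Hn. destruct n as [| k]; [lia |].
unfold ratio_sq. simpl pred. rewrite (Gamma_half_SS k), (Gamma_half_SS (S k)).
pose proof (Gamma_half_pos k). pose proof (Gamma_half_pos (S k)).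
rewrite !S_INR. pose proof (pos_INR k).
field. lra.
Qed.

Lemma ratio_sq_le (n : nat) : (2 <= n)%nat -> ratio_sq n <= 2 / INR n.
Proof.
intros Hn. destruct n as [| [| k]]; [lia | lia |].
unfold ratio_sq. simpl pred.
pose proof (Gamma_half_sqr_le k) as H. rewrite Gamma_half_SS in H |- *.
pose proof (Gamma_half_pos k). pose proof (Gamma_half_pos (S k)). pose proof (pos_INR k).
set (b := (INR k / 2 + 1) * Gamma_half k).
assert (Hb : 0 < b) by (unfold b; nra).
replace ((Gamma_half (S k) / b) ^ 2) with (Gamma_half (S k) ^ 2 / b ^ 2) by (field; lra).
apply Rle_div_l; [apply pow_lt; lra |].
replace (2 / INR (S (S k)) * b ^ 2) with (Gamma_half k * b)
  by (unfold b; rewrite !S_INR; field; lra).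
exact H.
Qed.

Lemma ratio_sq_ge (n : nat) : (1 <= n)%nat -> 2 / (INR n + 1) <= ratio_sq n.
Proof.
intros Hn. destruct n as [| k]; [lia |].
unfold ratio_sq. simpl pred.
pose proof (Gamma_half_sqr_le k) as H. rewrite Gamma_half_SS in H.
pose proof (Gamma_half_pos k). pose proof (Gamma_half_pos (S k)). pose proof (pos_INR k).
replace ((Gamma_half k / Gamma_half (S k)) ^ 2)
  with (Gamma_half k ^ 2 / Gamma_half (S k) ^ 2) by (field; lra).
apply (Rle_div_r _ _ (Gamma_half (S k) ^ 2)); [apply pow_lt; lra |].
apply Rmult_le_reg_r with (INR k + 2); [lra |].
replace (2 / (INR (S k) + 1) * Gamma_half (S k) ^ 2 * (INR k + 2))
  with (2 * Gamma_half (S k) ^ 2) by (rewrite S_INR; field; lra).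
nra.
Qed.

Fixpoint horner (cs : list R) (m : R) : R :=
  match cs with
  | nil => 0
  | c :: cs' => c + m * horner cs' m
  end.

Lemma horner_nonneg (cs : list R) (m : R) :
  List.Forall (Rle 0) cs -> 0 <= m -> 0 <= horner cs m.
Proof.
intros Hcs Hm. induction Hcs as [| c cs Hc _ IH]; simpl; [lra |].
pose proof (Rmult_le_pos _ _ Hm IH). lra.
Qed.

Lemma horner_pos (c : R) (cs : list R) (m : R) :
  0 < c -> List.Forall (Rle 0) cs -> 0 <= m -> 0 < horner (c :: cs) m.
Proof.
intros Hc Hcs Hm. simpl.
pose proof (Rmult_le_pos _ _ Hm (horner_nonneg cs m Hcs Hm)). lra.
Qed.

Lemma div_lt_div_step (y0 y2 u0 u2 a b : R) :
  0 < y0 -> 0 < u0 -> 0 < u2 -> 0 < b ->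
  y2 * b = y0 * a -> u2 * b < u0 * a -> y0 / u0 < y2 / u2.
Proof.
intros Hy0 Hu0 Hu2 Hb Hy Hu.
apply Rmult_lt_reg_r with (u0 * u2 * b); [apply Rmult_lt_0_compat; nra |].
replace (y0 / u0 * (u0 * u2 * b)) with (y0 * (u2 * b)) by (field; lra).
replace (y2 / u2 * (u0 * u2 * b)) with (y0 * (u0 * a))
  by (replace (y0 * (u0 * a)) with (u0 * (y2 * b)) by (rewrite Hy; ring); field; lra).
now apply Rmult_lt_compat_l.
Qed.

Lemma lt_of_incr2_bounded (q : nat -> R) (a C : R) (N M : nat) :
  (forall n, (N <= n)%nat -> q n < q (S (S n))) ->
  (forall n, (M <= n)%nat -> q n <= a + C / INR n) ->
  forall n, (N <= n)%nat -> q n < a.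
Proof.
intros Hincr Hbound n Hn.
assert (Hchain : forall k, q (S (S n)) <= q (S (S n) + 2 * k)%nat).
{ induction k as [| k IH]; [rewrite Nat.add_0_r; lra |].
  replace (S (S n) + 2 * S k)%nat with (S (S (S (S n) + 2 * k))) by lia.
  pose proof (Hincr (S (S n) + 2 * k)%nat ltac:(lia)). lra. }
set (d := q (S (S n)) - q n).
assert (Hd : 0 < d) by (unfold d; pose proof (Hincr n Hn); lra).
destruct (INR_unbounded (C / d)) as [K HK].
set (m := (S (S n) + 2 * (K + M))%nat).
assert (HKm : INR K <= INR m) by (apply le_INR; lia).
assert (Hm : 0 < INR m) by (apply lt_0_INR; lia).
assert (HC : C / INR m < d).
{ apply Rmult_lt_reg_r with (INR m); trivial.
  replace (C / INR m * INR m) with C by (field; lra).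
  replace C with (C / d * d) by (field; lra). nra. }
pose proof (Hchain (K + M)%nat). pose proof (Hbound m ltac:(lia)).
unfold d, m in *. lra.
Qed.

Lemma pow_bounds (t e : R) (k : nat) : 0 <= t <= e -> 0 <= t ^ k <= e ^ k.
Proof. intros Ht. split; [apply pow_le | apply pow_incr]; lra. Qed.

(* [p] stands for [PI], of which only eight decimals are used. *)
Section Bounds.

Variable p : R.
Hypothesis p_near_pi : 314159265 / 100000000 <= p <= 314159266 / 100000000.

Lemma near_pi_ind (P : R -> Prop) :
  (forall t, 0 <= t <= / 100000000 -> P (314159265 / 100000000 + t)) -> P p.
Proof.
intros HP. replace p with (314159265 / 100000000 + (p - 314159265 / 100000000)) by ring.
apply HP. lra.
Qed.

(* After [p = 314159265/10^8 + t], lra uses [0 <= t^k <= 10^(-8k)] to fix the sign. *)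
Local Ltac pi_poly_sign :=
  pattern p; apply near_pi_ind; intros t Ht;
  pose proof (pow_bounds t _ 2 Ht); pose proof (pow_bounds t _ 3 Ht);
  pose proof (pow_bounds t _ 4 Ht); pose proof (pow_bounds t _ 5 Ht);
  pose proof (pow_bounds t _ 6 Ht); pose proof (pow_bounds t _ 7 Ht);
  pose proof (pow_bounds t _ 8 Ht); lra.

Definition eps1_coef : R := / 4 * p - 4 * p ^ 2 + 8 * p ^ 3.
Definition eps2_coef : R := 3 / 8 * p - 7 * p ^ 2 - 12 * p ^ 3 + 64 * p ^ 4.

Definition lower_sq (x : R) : R := 2 * p / (x + 4 * p + / 2) - eps1_coef / x ^ 3.
Definition upper_sq (x : R) : R := lower_sq x + eps2_coef / x ^ 4.

Definition lower_num (x : R) : R := 2 * p * x ^ 4 - eps1_coef * x * (x + 4 * p + / 2).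
Definition upper_num (x : R) : R :=
  2 * p * x ^ 4 + (eps2_coef - eps1_coef * x) * (x + 4 * p + / 2).

(* The polynomial equals [horner cs m] with [m = x - x0 >= 0], and every coefficient in [cs]
   is a polynomial in [p] that is positive on the allowed range of [p]. *)
Local Ltac horner_cert cs m :=
  match goal with |- 0 < ?e =>
    replace e with (horner cs m)
      by (cbn [horner]; unfold upper_num, lower_num, eps1_coef, eps2_coef; field) end;
  apply horner_pos; [| repeat constructor | lra]; pi_poly_sign.

Lemma upper_num_pos (x : R) : 0 <= x -> 0 < upper_num x.
Proof.
intros Hx.
assert (H1 : 0 < eps2_coef - eps1_coef * (4 * p + / 2))
  by (unfold eps1_coef, eps2_coef; pi_poly_sign).
assert (H2 : 0 < 8 * p * eps2_coef * (4 * p + / 2) - eps1_coef ^ 2)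
  by (unfold eps1_coef, eps2_coef; pi_poly_sign).
assert (E : 8 * p * upper_num x
  = (4 * p * x ^ 2 - eps1_coef) ^ 2 + 8 * p * (eps2_coef - eps1_coef * (4 * p + / 2)) * x
    + (8 * p * eps2_coef * (4 * p + / 2) - eps1_coef ^ 2)) by (unfold upper_num; ring).
pose proof (pow2_ge_0 (4 * p * x ^ 2 - eps1_coef)).
assert (0 <= p * (eps2_coef - eps1_coef * (4 * p + / 2)) * x) by (apply Rmult_le_pos; nra).
nra.
Qed.

Lemma lower_num_eq (x : R) :
  lower_num x = x * (2 * p * x ^ 3 - eps1_coef * (x + 4 * p + / 2)).
Proof. unfold lower_num. ring. Qed.

Lemma lower_num_neg (x : R) : 0 < x <= 9 -> lower_num x < 0.
Proof.
intros Hx. rewrite lower_num_eq.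
assert (H1 : 0 < 162 * p - eps1_coef) by (unfold eps1_coef; pi_poly_sign).
assert (H2 : 1458 * p - eps1_coef * (9 + 4 * p + / 2) < 0) by (unfold eps1_coef; pi_poly_sign).
assert (x ^ 3 <= 81 * x) by (replace (x ^ 3) with (x * x ^ 2) by ring; nra).
assert (2 * p * x ^ 3 <= 2 * p * (81 * x)) by (apply Rmult_le_compat_l; lra).
assert ((162 * p - eps1_coef) * x <= (162 * p - eps1_coef) * 9) by nra.
assert (2 * p * x ^ 3 - eps1_coef * (x + 4 * p + / 2) < 0) by lra.
nra.
Qed.

Lemma lower_num_pos (x : R) : 10 <= x -> 0 < lower_num x.
Proof.
intros Hx. rewrite lower_num_eq.
assert (H1 : 0 < 200 * p - eps1_coef) by (unfold eps1_coef; pi_poly_sign).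
assert (H2 : 0 < 2000 * p - eps1_coef * (10 + 4 * p + / 2)) by (unfold eps1_coef; pi_poly_sign).
assert (100 * x <= x ^ 3) by (replace (x ^ 3) with (x * x ^ 2) by ring; nra).
assert (2 * p * (100 * x) <= 2 * p * x ^ 3) by (apply Rmult_le_compat_l; lra).
assert ((200 * p - eps1_coef) * 10 <= (200 * p - eps1_coef) * x) by nra.
assert (0 < 2 * p * x ^ 3 - eps1_coef * (x + 4 * p + / 2)) by lra.
nra.
Qed.

Lemma upper_num_step_pos (x : R) : 1 <= x ->
  0 < upper_num x * (x + 1 + 2 * p) ^ 2 * (x + 2) ^ 2 * (x + 2 + 4 * p + / 2) * (x + 3) ^ 2
      - upper_num (x + 2) * (x + 3 + 2 * p) ^ 2 * x ^ 4 * (x + 4 * p + / 2).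
Proof.
intros Hx. horner_cert
  ([ 1107/2*p - 17457/2*p^2 - 845105/8*p^3 - 251595*p^4 + 324028*p^5 + 1604800*p^6 + 1713408*p^7 + 585728*p^8;
     5439/4*p - 200425/8*p^2 - 1044679/4*p^3 - 486704*p^4 + 1083384*p^5 + 3402496*p^6 + 2749952*p^7 + 671744*p^8;
     42867/32*p - 115921/4*p^2 - 2123365/8*p^3 - 366283*p^4 + 1325004*p^5 + 2859200*p^6 + 1686784*p^7 + 274432*p^8;
     10871/16*p - 139005/8*p^2 - 141926*p^3 - 129166*p^4 + 804656*p^5 + 1193600*p^6 + 468992*p^7 + 40960*p^8;
     6039/32*p - 5716*p^2 - 84039/2*p^3 - 18084*p^4 + 261328*p^5 + 246528*p^6 + 49152*p^7;
     219/8*p - 1957/2*p^2 - 6498*p^3 + 504*p^4 + 43136*p^5 + 19968*p^6;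
     13/8*p - 68*p^2 - 408*p^3 + 256*p^4 + 2816*p^5])
  (x - 1).
Qed.

Lemma upper_num_asym_pos (x : R) : 1 <= x ->
  0 < upper_num x * (x + 1 + 2 * p) ^ 2 * (x + 5) - 2 * p * x ^ 4 * (x + 4 * p + / 2) * (x + 1) ^ 2.
Proof.
intros Hx. horner_cert
  ([ 81/2*p - 23*p^2 - 2295/2*p^3 - 1728*p^4 + 5904*p^5 + 12672*p^6 + 6144*p^7;
     717/4*p + 218*p^2 - 5589/4*p^3 - 864*p^4 + 8664*p^5 + 9024*p^6 + 1024*p^7;
     2863/8*p + 2419/4*p^2 - 507*p^3 + 96*p^4 + 3392*p^5 + 1152*p^6;
     6187/16*p + 567*p^2 - 51*p^3 + 32*p^4 + 352*p^5;
     925/4*p + 233*p^2;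
     287/4*p + 36*p^2;
     9*p])
  (x - 1).
Qed.

Lemma lower_num_step_pos (x : R) : 10 <= x ->
  0 < lower_num (x + 2) * (x + 3 + 2 * p) ^ 2 * x ^ 4 * (x + 4 * p + / 2)
      - lower_num x * (x + 1 + 2 * p) ^ 2 * (x + 2) ^ 2 * (x + 2 + 4 * p + / 2) * (x + 3) ^ 2.
Proof.
intros Hx. horner_cert
  ([ 57417750*p - 935652120*p^2 - 2257124520*p^3 + 7825159680*p^4 + 4514208000*p^5 + 903475200*p^6 + 63160320*p^7;
     35341995*p - 586697372*p^2 - 1354893412*p^3 + 4981203968*p^4 + 2429578880*p^5 + 404224000*p^6 + 22700032*p^7;
     74455341/8*p - 314877977/2*p^2 - 695097587/2*p^3 + 1355816800*p^4 + 544099568*p^5 + 72251648*p^6 + 3056640*p^7;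
     21747613/16*p - 93749339/4*p^2 - 197510159/4*p^3 + 204557520*p^4 + 64898136*p^5 + 6449280*p^6 + 182784*p^7;
     475587/4*p - 8361443/4*p^2 - 4195657*p^3 + 18476432*p^4 + 4348256*p^5 + 287488*p^6 + 4096*p^7;
     99669/16*p - 223397/2*p^2 - 213181*p^3 + 999136*p^4 + 155168*p^5 + 5120*p^6;
     181*p - 3311*p^2 - 5996*p^3 + 29952*p^4 + 2304*p^5;
     9/4*p - 42*p^2 - 72*p^3 + 384*p^4])
  (x - 10).
Qed.

Lemma lower_num_asym_pos (x : R) : 10 <= x ->
  0 < 2 * p * x ^ 5 * (x + 4 * p + / 2) * (x + 1) - lower_num x * (x + 1 + 2 * p) ^ 2 * (x - 5).
Proof.
intros Hx. horner_cert
  ([ 44063525/4*p + 4157725*p^2 - 78275*p^3 + 335000*p^4 + 84000*p^5 + 6400*p^6;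
     51193315/8*p + 4038185/2*p^2 - 74465/2*p^3 + 166100*p^4 + 33200*p^5 + 1920*p^6;
     12384351/8*p + 392287*p^2 - 12581/2*p^3 + 29580*p^4 + 4080*p^5 + 128*p^6;
     1596979/8*p + 76231/2*p^2 - 455*p^3 + 2272*p^4 + 160*p^5;
     115775/8*p + 1852*p^2 - 12*p^3 + 64*p^4;
     2237/4*p + 36*p^2;
     9*p])
  (x - 10).
Qed.

(* The square of the middle term of the theorem is [p * ratio_sq n * ((n+1)/(n+1+2p))^2],
   so [upper_sq] and [lower_sq] translate into these bounds on [ratio_sq n]. *)
Definition y_upper (x : R) : R := upper_sq x / (p * ((x + 1) / (x + 1 + 2 * p)) ^ 2).
Definition y_lower (x : R) : R := lower_sq x / (p * ((x + 1) / (x + 1 + 2 * p)) ^ 2).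

Lemma y_upper_eq (x : R) : 0 < x ->
  y_upper x = upper_num x * (x + 1 + 2 * p) ^ 2 / (p * x ^ 4 * (x + 4 * p + / 2) * (x + 1) ^ 2).
Proof. intros Hx. unfold y_upper, upper_sq, lower_sq, upper_num. field. lra. Qed.

Lemma y_lower_eq (x : R) : 0 < x ->
  y_lower x = lower_num x * (x + 1 + 2 * p) ^ 2 / (p * x ^ 4 * (x + 4 * p + / 2) * (x + 1) ^ 2).
Proof. intros Hx. unfold y_lower, lower_sq, lower_num. field. lra. Qed.

Lemma y_upper_pos (x : R) : 0 < x -> 0 < y_upper x.
Proof.
intros Hx. rewrite y_upper_eq by trivial.
apply Rdiv_lt_0_compat; [apply Rmult_lt_0_compat; [apply upper_num_pos |] |];
  repeat apply Rmult_lt_0_compat; try apply pow_lt; lra.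
Qed.

Lemma y_lower_pos (x : R) : 10 <= x -> 0 < y_lower x.
Proof.
intros Hx. rewrite y_lower_eq by lra.
apply Rdiv_lt_0_compat; [apply Rmult_lt_0_compat; [apply lower_num_pos |] |];
  repeat apply Rmult_lt_0_compat; try apply pow_lt; lra.
Qed.

Lemma y_upper_step (x : R) : 1 <= x ->
  y_upper (x + 2) * (x + 2) ^ 2 < y_upper x * (x + 1) ^ 2.
Proof.
intros Hx.
set (D := p * x ^ 4 * (x + 4 * p + / 2) * (x + 2) ^ 2 * (x + 2 + 4 * p + / 2) * (x + 3) ^ 2).
assert (HD : 0 < D) by (unfold D; repeat apply Rmult_lt_0_compat; try apply pow_lt; lra).
enough (0 < (y_upper x * (x + 1) ^ 2 - y_upper (x + 2) * (x + 2) ^ 2) * D)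
  by (apply Rmult_lt_reg_r with D; lra).
rewrite !y_upper_eq by lra.
replace (_ * D) with
  (upper_num x * (x + 1 + 2 * p) ^ 2 * (x + 2) ^ 2 * (x + 2 + 4 * p + / 2) * (x + 3) ^ 2
   - upper_num (x + 2) * (x + 3 + 2 * p) ^ 2 * x ^ 4 * (x + 4 * p + / 2))
  by (unfold D; field; lra).
now apply upper_num_step_pos.
Qed.

Lemma y_lower_step (x : R) : 10 <= x ->
  y_lower x * (x + 1) ^ 2 < y_lower (x + 2) * (x + 2) ^ 2.
Proof.
intros Hx.
set (D := p * x ^ 4 * (x + 4 * p + / 2) * (x + 2) ^ 2 * (x + 2 + 4 * p + / 2) * (x + 3) ^ 2).
assert (HD : 0 < D) by (unfold D; repeat apply Rmult_lt_0_compat; try apply pow_lt; lra).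
enough (0 < (y_lower (x + 2) * (x + 2) ^ 2 - y_lower x * (x + 1) ^ 2) * D)
  by (apply Rmult_lt_reg_r with D; lra).
rewrite !y_lower_eq by lra.
replace (_ * D) with
  (lower_num (x + 2) * (x + 3 + 2 * p) ^ 2 * x ^ 4 * (x + 4 * p + / 2)
   - lower_num x * (x + 1 + 2 * p) ^ 2 * (x + 2) ^ 2 * (x + 2 + 4 * p + / 2) * (x + 3) ^ 2)
  by (unfold D; field; lra).
now apply lower_num_step_pos.
Qed.

Lemma y_upper_asym (x : R) : 1 <= x -> 2 / x <= y_upper x * (1 + 5 / x).
Proof.
intros Hx.
set (D := p * x ^ 5 * (x + 4 * p + / 2) * (x + 1) ^ 2).
assert (HD : 0 < D) by (unfold D; repeat apply Rmult_lt_0_compat; try apply pow_lt; lra).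
enough (0 < (y_upper x * (1 + 5 / x) - 2 / x) * D)
  by (left; apply Rmult_lt_reg_r with D; lra).
rewrite y_upper_eq by lra.
replace (_ * D) with
  (upper_num x * (x + 1 + 2 * p) ^ 2 * (x + 5) - 2 * p * x ^ 4 * (x + 4 * p + / 2) * (x + 1) ^ 2)
  by (unfold D; field; lra).
now apply upper_num_asym_pos.
Qed.

Lemma y_lower_asym (x : R) : 10 <= x -> y_lower x * (1 - 5 / x) <= 2 / (x + 1).
Proof.
intros Hx.
set (D := p * x ^ 5 * (x + 4 * p + / 2) * (x + 1) ^ 2).
assert (HD : 0 < D) by (unfold D; repeat apply Rmult_lt_0_compat; try apply pow_lt; lra).
enough (0 < (2 / (x + 1) - y_lower x * (1 - 5 / x)) * D)
  by (left; apply Rmult_lt_reg_r with D; lra).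
rewrite y_lower_eq by lra.
replace (_ * D) with
  (2 * p * x ^ 5 * (x + 4 * p + / 2) * (x + 1) - lower_num x * (x + 1 + 2 * p) ^ 2 * (x - 5))
  by (unfold D; field; lra).
now apply lower_num_asym_pos.
Qed.

Lemma lower_sq_neg (x : R) : 0 < x <= 9 -> lower_sq x < 0.
Proof.
intros Hx.
replace (lower_sq x) with (lower_num x / (x ^ 4 * (x + 4 * p + / 2)))
  by (unfold lower_sq, lower_num; field; lra).
apply Rdiv_neg_pos; [now apply lower_num_neg |].
apply Rmult_lt_0_compat; [apply pow_lt |]; lra.
Qed.

Lemma sq_factor_pos (x : R) : 0 < x -> 0 < p * ((x + 1) / (x + 1 + 2 * p)) ^ 2.
Proof. intros Hx. apply Rmult_lt_0_compat; [lra | apply pow_lt, Rdiv_lt_0_compat; lra]. Qed.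

Lemma upper_sq_gt (x y : R) : 0 < x -> y < y_upper x ->
  p * y * ((x + 1) / (x + 1 + 2 * p)) ^ 2 < upper_sq x.
Proof.
intros Hx Hy. rewrite (Rmult_comm p y), Rmult_assoc.
now apply Rlt_div_r; [apply sq_factor_pos |].
Qed.

Lemma lower_sq_lt (x y : R) : 0 < x -> y_lower x < y ->
  lower_sq x < p * y * ((x + 1) / (x + 1 + 2 * p)) ^ 2.
Proof.
intros Hx Hy. rewrite (Rmult_comm p y), Rmult_assoc.
now apply Rlt_div_l; [apply sq_factor_pos |].
Qed.

End Bounds.

Lemma PI_approx : 314159265 / 100000000 <= PI <= 314159266 / 100000000.
Proof.
pose proof (PI_2_3_7_ineq 4) as H.
unfold sum_f_R0, tg_alt, PI_2_3_7_tg, Ratan_seq in H. simpl in H. lra.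
Qed.

Lemma ratio_sq_lt_y_upper (n : nat) : (1 <= n)%nat -> ratio_sq n < y_upper PI (INR n).
Proof.
pose proof PI_approx as Hpi.
assert (Hpos : forall m, (1 <= m)%nat -> 0 < y_upper PI (INR m))
  by (intros m Hm; apply (le_INR 1) in Hm; apply y_upper_pos; simpl in *; lra).
intros Hn. rewrite <- (Rmult_1_l (y_upper PI (INR n))).
apply Rlt_div_l; [apply Hpos; trivial |]. revert n Hn.
apply (lt_of_incr2_bounded _ 1 5 1 2).
- intros m Hm. pose proof (pos_INR m).
  apply (div_lt_div_step _ _ _ _ ((INR m + 1) ^ 2) ((INR m + 2) ^ 2));
    [apply ratio_sq_pos | apply Hpos; lia | apply Hpos; lia | apply pow_lt; lra
    | now apply ratio_sq_SS |].
  replace (INR (S (S m))) with (INR m + 2) by (rewrite !S_INR; ring).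
  apply y_upper_step; trivial. apply (le_INR 1) in Hm. simpl in Hm. lra.
- intros m Hm. pose proof (Hpos m ltac:(lia)) as HU.
  pose proof (ratio_sq_le m Hm). apply (le_INR 2) in Hm. simpl in Hm.
  pose proof (y_upper_asym PI Hpi (INR m) ltac:(lra)).
  apply Rle_div_l; [trivial | lra].
Qed.

Lemma y_lower_lt_ratio_sq (n : nat) : (10 <= n)%nat -> y_lower PI (INR n) < ratio_sq n.
Proof.
pose proof PI_approx as Hpi.
assert (H10 : forall m, (10 <= m)%nat -> 10 <= INR m)
  by (intros m Hm; apply le_INR in Hm; simpl in Hm; lra).
assert (Hpos : forall m, (10 <= m)%nat -> 0 < y_lower PI (INR m))
  by (intros m Hm; apply y_lower_pos; auto).
intros Hn. rewrite <- (Rmult_1_l (y_lower PI (INR n))).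
apply Rlt_div_r; [apply Hpos; trivial |].
enough (- (ratio_sq n / y_lower PI (INR n)) < - 1) by lra. revert n Hn.
apply (lt_of_incr2_bounded _ (- 1) 5 10 10).
- intros m Hm. apply Ropp_lt_contravar. pose proof (pos_INR m).
  apply (div_lt_div_step _ _ _ _ ((INR m + 2) ^ 2) ((INR m + 1) ^ 2));
    [apply ratio_sq_pos | apply Hpos; lia | apply Hpos; lia | apply pow_lt; lra
    | symmetry; apply ratio_sq_SS; lia |].
  replace (INR (S (S m))) with (INR m + 2) by (rewrite !S_INR; ring).
  apply y_lower_step; auto.
- intros m Hm. pose proof (Hpos m Hm) as HL.
  pose proof (ratio_sq_ge m ltac:(lia)).
  pose proof (y_lower_asym PI Hpi (INR m) (H10 m Hm)).
  enough (1 - 5 / INR m <= ratio_sq m / y_lower PI (INR m)) by lra.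
  apply Rle_div_r; [trivial | lra].
Qed.

Lemma Omega_ratio_eq (n : nat) : (1 <= n)%nat ->
  Omega n / (Omega (Nat.sub n 1) + Omega (S n))
  = sqrt (PI * ratio_sq n * ((INR n + 1) / (INR n + 1 + 2 * PI)) ^ 2).
Proof.
intros Hn. destruct n as [| k]; [lia |]. replace (Nat.sub (S k) 1) with k by lia.
pose proof PI_RGT_0 as Hpi. pose proof (pos_INR k) as Hk.
pose proof (Gamma_half_pos k). pose proof (Gamma_half_pos (S k)).
pose proof (sqrt_lt_R0 PI Hpi). pose proof (exp_pos (INR k / 2 * ln PI)) as Hpow.
unfold ratio_sq. simpl pred.
set (F := (INR (S k) + 1) / (INR (S k) + 1 + 2 * PI)).
assert (HF : 0 < F) by (unfold F; rewrite S_INR; apply Rdiv_lt_0_compat; lra).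
replace (PI * (Gamma_half k / Gamma_half (S k)) ^ 2 * F ^ 2)
  with ((sqrt PI * (Gamma_half k / Gamma_half (S k)) * F) ^ 2)
  by (rewrite !Rpow_mult_distr, pow2_sqrt; lra).
rewrite sqrt_pow2
  by (apply Rmult_le_pos; [apply Rmult_le_pos |]; left; [| apply Rdiv_lt_0_compat |]; lra).
unfold Omega. fold (Gamma_half k) (Gamma_half (S k)) (Gamma_half (S (S k))).
replace (INR (S k) / 2) with (INR k / 2 + / 2) by (rewrite S_INR; field).
replace (INR (S (S k)) / 2) with (INR k / 2 + 1) by (rewrite !S_INR; field).
rewrite !Rpower_plus, Rpower_sqrt, Rpower_1, Gamma_half_SS by lra.
unfold Rpower at 1 2 3, F. rewrite S_INR.
field. repeat split; try lra. nra.
Qed.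

Lemma sqrt_lt_sqrt_pos (a b : R) : 0 < b -> a < b -> sqrt a < sqrt b.
Proof.
intros Hb Hab. destruct (Rle_or_lt a 0) as [Ha | Ha].
- rewrite sqrt_neg_0 by trivial. now apply sqrt_lt_R0.
- apply sqrt_lt_1_alt. lra.
Qed.

Theorem theorem12 (n : nat) (hn : (1 <= n)%nat) :
  sqrt (2 * PI / (INR n + 4 * PI + /2) + eps_1 n)
    < Omega n / (Omega (Nat.sub n 1) + Omega (S n))
  /\ Omega n / (Omega (Nat.sub n 1) + Omega (S n))
    < sqrt (2 * PI / (INR n + 4 * PI + /2) + eps_2 n).
Proof.
pose proof PI_approx as Hpi.
assert (Hx : 1 <= INR n) by (apply (le_INR 1) in hn; simpl in hn; lra).
rewrite Omega_ratio_eq by trivial.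
replace (2 * PI / (INR n + 4 * PI + / 2) + eps_1 n) with (lower_sq PI (INR n))
  by (unfold lower_sq, eps1_coef, eps_1; field; lra).
replace (2 * PI / (INR n + 4 * PI + / 2) + eps_2 n) with (upper_sq PI (INR n))
  by (unfold upper_sq, lower_sq, eps1_coef, eps2_coef, eps_2, eps_1; field; lra).
set (M := PI * ratio_sq n * ((INR n + 1) / (INR n + 1 + 2 * PI)) ^ 2).
assert (HM : 0 < M).
{ unfold M. rewrite Rmult_assoc, (Rmult_comm (ratio_sq n)), <- Rmult_assoc.
  apply Rmult_lt_0_compat; [apply sq_factor_pos; [exact Hpi | lra] | apply ratio_sq_pos]. }
assert (HU : M < upper_sq PI (INR n))
  by (apply upper_sq_gt; [exact Hpi | lra | now apply ratio_sq_lt_y_upper]).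
assert (HL : lower_sq PI (INR n) < M).
{ destruct (Nat.le_gt_cases 10 n) as [H10 | H9].
  - apply lower_sq_lt; [exact Hpi | lra | now apply y_lower_lt_ratio_sq].
  - assert (H9r : INR n <= INR 9) by (apply le_INR; lia). simpl in H9r.
    apply Rlt_trans with 0; [apply lower_sq_neg; [exact Hpi | lra] | exact HM]. }
split; apply sqrt_lt_sqrt_pos; lra.
Qed.
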